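(* Given the stochastic system, a PRTL formula $\varphi$, and a prior belief state $b_0\sim\mathcal N(\hat x_{init},\Sigma_{init})$ (as in the context), Algorithm idPRTL finds a path $\rho_H$ only if $\rho_H\models\varphi$.
   Context: System: $x_{k+1}=Ax_k+Bu_k+\sqrt W\xi$, $y_k=Cx_k+\sqrt{V_k}\xi$, $\xi\sim\mathcal N(0,I_n)$, $x\in\mathbb R^n$, $u\in U=\{H_uu\ge c_u\}$ a full-dimensional polytope, $(A,B)$ stabilisable, $W\succeq0$, $V_k\succeq0$ possibly state dependent. Beliefs $b_k\sim\mathcal N(\hat x_k,\Sigma_k)$; a path is the belief sequence $\rho=b_0b_1\dots$; planning uses the MLO belief dynamics $\hat x_{k+1}=A\hat x_k+Bu_k$, $\Sigma_{k+1}=\bar\Sigma_k-K_kC\bar\Sigma_k$, $\bar\Sigma_k=A\Sigma_kA^\top+W$, $K_k=\bar\Sigma_kC^\top(C\bar\Sigma_kC^\top+V_k)^{-1}$. PRTL: $\varphi::=\pi\mid\neg\pi\mid\varphi_1\wedge\varphi_2\mid\varphi_1\vee\varphi_2\mid\varphi_1\mathcal U\varphi_2\mid\varphi_1\mathcal R\varphi_2$, predicates $\pi$ given by tolerance $\epsilon\in[0,1]$ and $g(x)=c-a^\top x$; $\rho\models_k\pi$ iff $P(g(x_k)\ge0)>1-\epsilon$ (equivalently $a^\top\hat x_k-\Phi^{-1}(\epsilon)\|\sqrt{\Sigma_k}a\|_2<c$), $\rho\models_k\neg\pi$ iff $P(-g(x_k)\ge0)>1-\epsilon$; Boolean connectives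 as usual; $\rho\models_k\varphi_1\mathcal U\varphi_2$ iff $\exists k'\ge k$, $\rho\models_{k'}\varphi_2$ and $\rho\models_{k''}\varphi_1$ for all $k\le k''\le k'$; $\rho\models_k\varphi_1\mathcal R\varphi_2$ iff ($\exists k'\ge k$ with $\rho\models_{k'}\varphi_1$ and $\rho\models_{k''}\varphi_2$ for all $k\le k''\le k'$) or $\rho\models_{k'}\varphi_2$ for all $k'\ge k$; $\rho\models\varphi$ iff $\rho\models_0\varphi$. Abstraction $M_\varphi$: a finite Kripke structure whose states are convex regions $\mathcal P_i$ of belief space (each the set of beliefs satisfying a subset of the predicates), labeled by the state subformulas of $\varphi$ valid on the whole region, with initial state the abstraction of $b_0$ and transitions between regions whose bounding polytopes (possibly enlarged by neighbouring regions with the same label) intersect; $\tilde\varphi$ is $\varphi$ with its state subformulas replaced by atomic propositions. Algorithm idPRTL: build $M_\varphi$ and $\tilde\varphi$; while bounded model checking (BMC) finds a discrete path $\mathbb P_K=\mathcal P_0\dots\mathcal P_{L-1}(\mathcal P_L\dots\mathcal P_K)^\omega$ of $M_\varphi$ satisfying $\tilde\varphi$: run the sampling-based feasibility search fSearch on $\mathbb P_K$, which searches (by propagating only valid segments of the MLO dynamics) for a belief path starting at $b_0$ that satisfies, at each instant $k$, the convex constraints of the region $\mathcal P_{\mathbb I(k)}$ of $\mathbb P_K$ ($\mathbb I$ increasing index function), with loop-closing conditions $\hat x_H=\hat x_{\mathbb I(L)}$, $\Sigma_H\le\Sigma_{\mathbb I(L)}$ if $L\le K$; if feasible, return the path and inputs;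 otherwise replace $M_\varphi$ by its product with the complement of $\mathbb P_K$. If BMC finds no path, return infeasible. *)

From HB Require Import structures.
From mathcomp Require Import all_boot all_order all_algebra.
From mathcomp Require Import all_classical all_reals all_analysis.
From Stdlib Require List.

Set Implicit Arguments.
Unset Strict Implicit.
Unset Printing Implicit Defensive.

Import Order.TTheory GRing.Theory Num.Theory.
Import numFieldNormedType.Exports.
Local Open Scope classical_set_scope.
Local Open Scope ring_scope.

Definition psd {R : realType} {n : nat} (M : 'M[R]_n) : Prop :=
  M^T = M /\ forall v : 'cV[R]_n, 0 <= (v^T *m M *m v) 0 0.

Definition loewner_le {R : realType} {n : nat} (S1 S2 : 'M[R]_n) : Prop :=
  psd (S2 - S1).

Definition inU {R : realType} {m r : nat} (Hu : 'M[R]_(r, m)) (cu : 'cV[R]_r)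
  (u : 'cV[R]_m) : Prop := forall i, cu i 0 <= (Hu *m u) i 0.

Definition full_dim_polytope {R : realType} {m r : nat}
  (Hu : 'M[R]_(r, m)) (cu : 'cV[R]_r) : Prop :=
  (exists M : R, forall u : 'cV[R]_m, inU Hu cu u -> forall j, `|u j 0| <= M) /\
  (exists u0 : 'cV[R]_m, exists e : R, 0 < e /\
     forall u : 'cV[R]_m, (forall j, `|u j 0 - u0 j 0| < e) -> inU Hu cu u).

Definition stabilisable {R : realType} {n m : nat}
  (A : 'M[R]_n) (B : 'M[R]_(n, m)) : Prop :=
  exists K : 'M[R]_(m, n), forall (x : 'cV[R]_n) (i : 'I_n),
    (fun k : nat => (iter k (mulmx (A + B *m K)) x) i 0) @ \oo --> (0 : R).

Record belief (R : realType) (n : nat) := Belief {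
  bmean : 'cV[R]_n ;
  bcov  : 'M[R]_n
}.
Arguments Belief {R n}.
Arguments bmean {R n}.
Arguments bcov {R n}.

(* one step of the maximum-likelihood-observation belief dynamics;
   the (possibly state dependent) noise covariance V_k is V (\hat x_k). *)
Definition mlo {R : realType} {n m q : nat}
  (A : 'M[R]_n) (B : 'M[R]_(n, m)) (C : 'M[R]_(q, n)) (W : 'M[R]_n)
  (V : 'cV[R]_n -> 'M[R]_q) (b : belief R n) (u : 'cV[R]_m) : belief R n :=
  let Sb := A *m bcov b *m A^T + W in
  let K := Sb *m C^T *m invmx (C *m Sb *m C^T + V (bmean b)) in
  Belief (A *m bmean b + B *m u) (Sb - K *m C *m Sb).

(* predicate pi given by tolerance eps and g(x) = c - a^T x *)
Record prtl_pred (R : realType) (n : nat) := PPred {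
  peps : R ;
  pa   : 'cV[R]_n ;
  pc   : R
}.
Arguments peps {R n}.
Arguments pa {R n}.
Arguments pc {R n}.

(* formulas in negation normal pform over atoms of type P *)
Inductive pform (P : Type) : Type :=
| FAtom of P
| FNAtom of P
| FAnd of pform P & pform P
| FOr of pform P & pform P
| FUntil of pform P & pform P
| FRelease of pform P & pform P.
Arguments FAtom {P}.
Arguments FNAtom {P}.
Arguments FAnd {P}.
Arguments FOr {P}.
Arguments FUntil {P}.
Arguments FRelease {P}.

Fixpoint sat {P : Type} (va vn : nat -> P -> Prop) (k : nat) (f : pform P)
  : Prop :=
  match f with
  | FAtom p => va k p
  | FNAtom p => vn k p
  | FAnd f1 f2 => sat va vn k f1 /\ sat va vn k f2
  | FOr f1 f2 => sat va vn k f1 \/ sat va vn k f2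
  | FUntil f1 f2 => exists k', (k <= k')%N /\ sat va vn k' f2 /\
      forall k'', (k <= k'' <= k')%N -> sat va vn k'' f1
  | FRelease f1 f2 =>
      (exists k', (k <= k')%N /\ sat va vn k' f1 /\
         forall k'', (k <= k'' <= k')%N -> sat va vn k'' f2)
      \/ (forall k', (k <= k')%N -> sat va vn k' f2)
  end.

(* bounded (no-loop) semantics on a finite path of positions 0..K, as used by
   bounded model checking for loop-free witnesses *)
Fixpoint sat_fin {P : Type} (va vn : nat -> P -> Prop) (K k : nat) (f : pform P)
  : Prop :=
  match f with
  | FAtom p => va k p
  | FNAtom p => vn k p
  | FAnd f1 f2 => sat_fin va vn K k f1 /\ sat_fin va vn K k f2
  | FOr f1 f2 => sat_fin va vn K k f1 \/ sat_fin va vn K k f2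
  | FUntil f1 f2 => exists k', (k <= k' <= K)%N /\ sat_fin va vn K k' f2 /\
      forall k'', (k <= k'' <= k')%N -> sat_fin va vn K k'' f1
  | FRelease f1 f2 => exists k', (k <= k' <= K)%N /\ sat_fin va vn K k' f1 /\
      forall k'', (k <= k'' <= k')%N -> sat_fin va vn K k'' f2
  end.

(* probability that a scalar Gaussian N(mu, v) lies in the set S
   (v = 0: the degenerate Dirac law at mu) *)
Definition gauss1_prob {R : realType} (mu v : R) (S : set R) : \bar R :=
  if 0 < v then normal_prob mu (Num.sqrt v) S else (\1_S mu)%:E.

(* For x ~ N(\hat x, Sigma), the scalar a^T x ~ N(a^T \hat x, a^T Sigma a). *)
Definition lin_mean {R : realType} {n : nat} (b : belief R n) (a : 'cV[R]_n) : R :=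
  (a^T *m bmean b) 0 0.
Definition lin_var {R : realType} {n : nat} (b : belief R n) (a : 'cV[R]_n) : R :=
  (a^T *m bcov b *m a) 0 0.

(* b |= pi   iff  P(g(x) >= 0) > 1 - eps,  i.e. P(a^T x <= c) > 1 - eps *)
Definition pred_sat {R : realType} {n : nat} (b : belief R n) (p : prtl_pred R n)
  : Prop :=
  ((1 - peps p)%:E < gauss1_prob (lin_mean b (pa p)) (lin_var b (pa p))
                        `]-oo, pc p])%E.

(* b |= ~pi  iff  P(-g(x) >= 0) > 1 - eps,  i.e. P(a^T x >= c) > 1 - eps *)
Definition npred_sat {R : realType} {n : nat} (b : belief R n) (p : prtl_pred R n)
  : Prop :=
  ((1 - peps p)%:E < gauss1_prob (lin_mean b (pa p)) (lin_var b (pa p))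
                        `[pc p, +oo[)%E.

Definition prtl_sat {R : realType} {n : nat} (rho : nat -> belief R n) (k : nat)
  (f : pform (prtl_pred R n)) : Prop :=
  sat (fun k p => pred_sat (rho k) p) (fun k p => npred_sat (rho k) p) k f.

Definition prtl_models {R : realType} {n : nat} (rho : nat -> belief R n)
  (f : pform (prtl_pred R n)) : Prop := prtl_sat rho 0 f.

Definition bsat {R : realType} {n : nat} (b : belief R n)
  (f : pform (prtl_pred R n)) : Prop := prtl_sat (fun _ => b) 0 f.

Fixpoint preds_of {P : Type} (f : pform P) : list P :=
  match f with
  | FAtom p | FNAtom p => p :: nil
  | FAnd f1 f2 | FOr f1 f2 | FUntil f1 f2 | FRelease f1 f2 =>
      preds_of f1 ++ preds_of f2
  end.

Fixpoint lits_of {P : Type} (f : pform P) : list (pform P) :=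
  match f with
  | FAtom p => FAtom p :: nil
  | FNAtom p => FNAtom p :: nil
  | FAnd f1 f2 | FOr f1 f2 | FUntil f1 f2 | FRelease f1 f2 =>
      lits_of f1 ++ lits_of f2
  end.

Fixpoint is_state {P : Type} (f : pform P) : bool :=
  match f with
  | FAtom _ | FNAtom _ => true
  | FAnd f1 f2 | FOr f1 f2 => is_state f1 && is_state f2
  | FUntil _ _ | FRelease _ _ => false
  end.

(* phi~ : phi with its (maximal) state subformulas replaced by atomic
   propositions (the atom is the replaced state subformula itself) *)
Fixpoint tilde {P : Type} (f : pform P) : pform (pform P) :=
  if is_state f then FAtom f else
  match f with
  | FAtom _ | FNAtom _ => FAtom f
  | FAnd f1 f2 => FAnd (tilde f1) (tilde f2)
  | FOr f1 f2 => FOr (tilde f1) (tilde f2)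
  | FUntil f1 f2 => FUntil (tilde f1) (tilde f2)
  | FRelease f1 f2 => FRelease (tilde f1) (tilde f2)
  end.

Definition state_subs {P : Type} (f : pform P) : list (pform P) :=
  preds_of (tilde f).

Record kripke (R : realType) (n : nat) := Kripke {
  kst : finType ;
  kinit : kst ;
  ktrans : rel kst ;
  kregion : kst -> set (belief R n) ;
  klabel : kst -> pform (prtl_pred R n) -> Prop
}.
Arguments kinit {R n}.
Arguments ktrans {R n}.
Arguments kregion {R n}.
Arguments klabel {R n}.

(* M is an abstraction of phi with initial belief b0, as described:
   - the initial state is the abstraction of b0;
   - each region is the set of beliefs satisfying a subset of the
     (possibly negated) predicates of phi;
   - each state is labelled by exactly the state subformulas of phi valid on
     the whole region.
   (Transitions are left arbitrary.) *)
Definition is_abstraction {R : realType} {n : nat} (M : kripke R n)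
  (phi : pform (prtl_pred R n)) (b0 : belief R n) : Prop :=
  kregion M (kinit M) b0 /\
  (forall s, exists ls : list (pform (prtl_pred R n)),
      (forall l, List.In l ls -> List.In l (lits_of phi)) /\
      kregion M s = [set b | forall l, List.In l ls -> bsat b l]) /\
  (forall s psi, klabel M s psi <->
      (List.In psi (state_subs phi) /\ forall b, kregion M s b -> bsat b psi)).

(* a discrete path  P_0 ... P_{L-1} (P_L ... P_K)^omega  (loop iff L <= K) *)
Record dpath (S : Type) := DPath { dK : nat ; dL : nat ; dps : nat -> S }.
Arguments DPath {S}.
Arguments dK {S}.
Arguments dL {S}.
Arguments dps {S}.

Definition same_dpath {S : Type} (p q : dpath S) : Prop :=
  dK p = dK q /\ dL p = dL q /\ forall i, (i <= dK p)%N -> dps p i = dps q i.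

Definition is_kpath {R : realType} {n : nat} (M : kripke R n)
  (P : dpath (kst M)) : Prop :=
  dps P 0 = kinit M /\
  (forall i, (i < dK P)%N -> ktrans M (dps P i) (dps P i.+1)) /\
  ((dL P <= dK P)%N -> ktrans M (dps P (dK P)) (dps P (dL P))).

Definition unfold_pos (K L j : nat) : nat :=
  if (j <= K)%N then j else (L + (j - L) %% (K - L).+1)%N.

(* the discrete path satisfies phi~ (bounded model checking semantics:
   lasso paths by their infinite unfolding, loop-free ones by the bounded
   semantics) *)
Definition dpath_sat {R : realType} {n : nat} (M : kripke R n)
  (P : dpath (kst M)) (phi : pform (prtl_pred R n)) : Prop :=
  if (dL P <= dK P)%N then
    sat (fun j psi => klabel M (dps P (unfold_pos (dK P) (dL P) j)) psi)
        (fun _ _ => False) 0 (tilde phi)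
  else
    sat_fin (fun j psi => klabel M (dps P j) psi) (fun _ _ => False)
            (dK P) 0 (tilde phi).

(* BMC finds P in M_phi x (complements of the excluded paths) *)
Definition bmc_finds {R : realType} {n : nat} (M : kripke R n)
  (phi : pform (prtl_pred R n)) (excl : list (dpath (kst M)))
  (P : dpath (kst M)) : Prop :=
  is_kpath P /\ (forall Q, List.In Q excl -> ~ same_dpath P Q) /\
  dpath_sat P phi.

(* successful outcome of fSearch on P: a belief path b_0..b_H with inputs
   u_0..u_{H-1}, following the MLO dynamics from b0, with b_k in the region
   P_{I(k)} for an index function I (I(0)=0, stepping by 0 or 1), and, in the
   lasso case (loop entry at time kL, with I(kL) = L entered first at kL), the
   loop-closing conditions  xhat_H = xhat_kL,  Sigma_H <= Sigma_kL. *)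
Definition fsearch_ok {R : realType} {n m q r : nat}
  (A : 'M[R]_n) (B : 'M[R]_(n, m)) (C : 'M[R]_(q, n)) (W : 'M[R]_n)
  (V : 'cV[R]_n -> 'M[R]_q) (Hu : 'M[R]_(r, m)) (cu : 'cV[R]_r)
  (M : kripke R n) (b0 : belief R n) (P : dpath (kst M))
  (H : nat) (loop : option nat)
  (bs : nat -> belief R n) (us : nat -> 'cV[R]_m) : Prop :=
  bs 0 = b0 /\
  (forall k, (k < H)%N -> inU Hu cu (us k) /\ bs k.+1 = mlo A B C W V (bs k) (us k)) /\
  exists I : nat -> nat, I 0 = 0%N /\
  match loop with
  | Some kL =>
      (dL P <= dK P)%N /\ (0 < H)%N /\ (kL < H)%N /\
      (forall k, (k.+1 < H)%N -> I k.+1 = I k \/ I k.+1 = (I k).+1) /\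
      (forall k, (k < H)%N -> kregion M (dps P (I k)) (bs k)) /\
      I H.-1 = dK P /\ I kL = dL P /\ (forall k, (k < kL)%N -> (I k < dL P)%N) /\
      bmean (bs H) = bmean (bs kL) /\ loewner_le (bcov (bs H)) (bcov (bs kL))
  | None =>
      (dK P < dL P)%N /\
      (forall k, (k < H)%N -> I k.+1 = I k \/ I k.+1 = (I k).+1) /\
      (forall k, (k <= H)%N -> kregion M (dps P (I k)) (bs k)) /\
      I H = dK P
  end.

Inductive outcome (R : realType) (n m : nat) :=
| IdFound of nat & option nat & (nat -> belief R n) & (nat -> 'cV[R]_m)
| IdInfeasible.
Arguments IdFound {R n m}.
Arguments IdInfeasible {R n m}.

(* possible runs of idPRTL (BMC and the sampling-based fSearch are treated
   nondeterministically; fSearch may fail on any path) *)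
Inductive idPRTL_run {R : realType} {n m q r : nat}
  (A : 'M[R]_n) (B : 'M[R]_(n, m)) (C : 'M[R]_(q, n)) (W : 'M[R]_n)
  (V : 'cV[R]_n -> 'M[R]_q) (Hu : 'M[R]_(r, m)) (cu : 'cV[R]_r)
  (M : kripke R n) (phi : pform (prtl_pred R n)) (b0 : belief R n)
  : list (dpath (kst M)) -> outcome R n m -> Prop :=
| run_found excl P H loop bs us :
    bmc_finds phi excl P ->
    fsearch_ok A B C W V Hu cu b0 P H loop bs us ->
    idPRTL_run A B C W V Hu cu phi b0 excl (IdFound H loop bs us)
| run_refine excl P o :
    bmc_finds phi excl P ->
    idPRTL_run A B C W V Hu cu phi b0 (P :: excl) o ->
    idPRTL_run A B C W V Hu cu phi b0 excl o
| run_infeasible excl :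
    (forall P, ~ bmc_finds phi excl P) ->
    idPRTL_run A B C W V Hu cu phi b0 excl IdInfeasible.

(* the (infinite) belief path described by the lasso b_0..b_{kL-1}(b_kL..b_{H-1})^omega *)
Definition lasso_path {R : realType} {n : nat} (H kL : nat)
  (bs : nat -> belief R n) (k : nat) : belief R n :=
  if (k < H)%N then bs k else bs (kL + (k - kL) %% (H - kL))%N.

(* rho_H |= phi : for a lasso, its infinite unfolding satisfies phi; for a
   loop-free path b_0..b_H, every infinite continuation satisfies phi *)
Definition found_path_models {R : realType} {n : nat} (H : nat)
  (loop : option nat) (bs : nat -> belief R n) (phi : pform (prtl_pred R n))
  : Prop :=
  match loop with
  | Some kL => prtl_models (lasso_path H kL bs) phi
  | None => forall rho : nat -> belief R n,
      (forall k, (k <= H)%N -> rho k = bs k) -> prtl_models rho phi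
  end.

From Pilot Require Import Defs.
From HB Require Import structures.
From mathcomp Require Import all_boot all_order all_algebra.
From mathcomp Require Import all_classical all_reals all_analysis.
From mathcomp Require Import zify.
From Stdlib Require List.
Import Order.TTheory GRing.Theory Num.Theory.
Import Pilot.Defs.

(** BMC returns a path of the abstraction whose labels satisfy phi~, and
    fSearch returns a belief path that visits the regions of that path in
    order, staying one or more steps in each.  Every state subformula labelling
    a region holds at every belief of the region, and phi~ has no next
    operator, so its satisfaction survives this stuttering: a witness position
    of the discrete path is the image of some belief time under the
    (onto, nondecreasing, unit-step) index map.  For a lasso, the index map is
    taken into the unfolding of the discrete loop. *)

Lemma sat_state_local (P : Type) (va vn va' vn' : nat -> P -> Prop) j j' f :
  is_state f -> va j = va' j' -> vn j = vn' j' ->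
  sat va vn j f -> sat va' vn' j' f.
Proof.
move=> + Ea En; elim: f => [p|p|f1 IH1 f2 IH2|f1 IH1 f2 IH2|//|//] /=.
- by rewrite Ea.
- by rewrite En.
- by move=> /andP[s1 s2] [h1 h2]; split; [exact: IH1|exact: IH2].
- by move=> /andP[s1 s2] [h1|h2]; [left; exact: IH1|right; exact: IH2].
Qed.

Lemma bsat_prtl_sat (R : realType) (n : nat) (rho : nat -> belief R n) j f :
  is_state f -> bsat (rho j) f -> prtl_sat rho j f.
Proof. by move=> sf; apply: sat_state_local. Qed.

Local Open Scope nat_scope.

Definition stutter_step (g : nat -> nat) (i : nat) : Prop :=
  g i.+1 = g i \/ g i.+1 = (g i).+1.

Lemma stutter_mono g j k :
  (forall i, j <= i < k -> stutter_step g i) -> j <= k -> g j <= g k.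
Proof.
elim: k => [|k IH] st; first by rewrite leqn0 => /eqP->.
rewrite leq_eqVlt => /orP[/eqP->//|jk].
have st' i : j <= i < k -> stutter_step g i by move=> ?; apply: st; lia.
have := IH st' jk.
have [->|->] : stutter_step g k by apply: st; lia.
all: lia.
Qed.

Lemma stutter_ivt g j k N :
  (forall i, j <= i < k -> stutter_step g i) -> j <= k -> g j <= N <= g k ->
  exists2 i, j <= i <= k & g i = N.
Proof.
elim: k => [|k IH] st jk NB.
  by exists 0; [|move: jk NB; rewrite leqn0 => /eqP->]; lia.
have [jE|jk'] := eqVneq j k.+1; first by subst j; exists k.+1; lia.
have {}jk : j <= k by lia.
have st' i : j <= i < k -> stutter_step g i by move=> ?; apply: st; lia.
have [Nk|kN] := leqP N (g k).
  have [|i ? <-] := IH st' jk; first lia.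
  by exists i; first lia.
exists k.+1; first lia.
have : stutter_step g k by apply: st; lia.
case; lia.
Qed.

Section Stuttering.

Context {P : Type} {va vn : nat -> P -> Prop} {lab nlab : nat -> pform P -> Prop}.
Context {g : nat -> nat}.

Lemma sat_tilde_stutter :
  (forall i, stutter_step g i) -> (forall N, exists j, N <= g j) ->
  (forall j f, is_state f -> lab (g j) f -> sat va vn j f) ->
  forall f j, sat lab nlab (g j) (tilde f) -> sat va vn j f.
Proof.
move=> st g_unbounded label_sat.
have mono j k : j <= k -> g j <= g k by apply: stutter_mono => i _.
have reach j N : g j <= N -> exists2 j', j <= j' & g j' = N.
  move=> jN; have [k Nk] := g_unbounded N.
  have [|i ? <-] := @stutter_ivt g j (maxn j k) N (fun i _ => st i) (leq_maxl _ _).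
    by rewrite jN (leq_trans Nk) ?mono ?leq_maxr.
  by exists i; lia.
elim=> [p|p|f1 IH1 f2 IH2|f1 IH1 f2 IH2|f1 IH1 f2 IH2|f1 IH1 f2 IH2] j /=.
- exact: label_sat.
- exact: label_sat.
- case: ifP => [sf|_ [h1 h2]]; first exact: label_sat.
  by split; [exact: IH1|exact: IH2].
- case: ifP => [sf|_ [h1|h2]]; first exact: label_sat.
  + by left; exact: IH1.
  + by right; exact: IH2.
- move=> [k [jk [h2 h1]]]; have [j' jj' gj'] := reach j k jk.
  exists j'; split => //; split; first by apply: IH2; rewrite gj'.
  by move=> i /andP[ji ij']; apply/IH1/h1; rewrite -gj' !mono.
- move=> [[k [jk [h1 h2]]]|h2].
    have [j' jj' gj'] := reach j k jk.
    left; exists j'; split => //; split; first by apply: IH1; rewrite gj'.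
    by move=> i /andP[ji ij']; apply/IH2/h2; rewrite -gj' !mono.
  by right=> i ji; apply/IH2/h2/mono.
Qed.

Lemma sat_fin_tilde_stutter {H K : nat} :
  (forall i, i < H -> stutter_step g i) -> g H = K ->
  (forall j f, j <= H -> is_state f -> lab (g j) f -> sat va vn j f) ->
  forall f j, j <= H -> sat_fin lab nlab K (g j) (tilde f) -> sat va vn j f.
Proof.
move=> st gH label_sat.
have mono j k : j <= k <= H -> g j <= g k.
  by move=> /andP[jk kH]; apply: stutter_mono jk => i ?; apply: st; lia.
have reach j N : j <= H -> g j <= N <= K -> exists2 j', j <= j' <= H & g j' = N.
  by move=> jH; rewrite -gH; apply: stutter_ivt jH => i ?; apply: st; lia.
elim=> [p|p|f1 IH1 f2 IH2|f1 IH1 f2 IH2|f1 IH1 f2 IH2|f1 IH1 f2 IH2] j jH /=.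
- exact: label_sat.
- exact: label_sat.
- case: ifP => [sf|_ [h1 h2]]; first exact: label_sat.
  by split; [exact: IH1|exact: IH2].
- case: ifP => [sf|_ [h1|h2]]; first exact: label_sat.
  + by left; exact: IH1.
  + by right; exact: IH2.
- move=> [k [jk [h2 h1]]]; have [j' /andP[jj' j'H] gj'] := reach j k jH jk.
  exists j'; split => //; split; first by apply: IH2 => //; rewrite gj'.
  move=> i /andP[ji ij']; apply: IH1; first lia.
  by apply: h1; rewrite -gj'; apply/andP; split; apply: mono; lia.
- move=> [k [jk [h1 h2]]]; have [j' /andP[jj' j'H] gj'] := reach j k jH jk.
  left; exists j'; split => //; split; first by apply: IH1 => //; rewrite gj'.
  move=> i /andP[ji ij']; apply: IH2; first lia.
  by apply: h2; rewrite -gj'; apply/andP; split; apply: mono; lia.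
Qed.

End Stuttering.

Lemma modn_divnS d p : 0 < p ->
  if (d %% p).+1 == p then d.+1 %% p = 0 /\ d.+1 %/ p = (d %/ p).+1
  else d.+1 %% p = (d %% p).+1 /\ d.+1 %/ p = d %/ p.
Proof.
move=> p_gt0; have -> : d.+1 = d %/ p * p + (d %% p).+1 by rewrite addnS -divn_eq.
case: eqP => [->|neq]; first by rewrite -mulSnr modnMl mulnK.
have lt : (d %% p).+1 < p by rewrite ltn_neqAle ltn_pmod ?andbT; [apply/eqP|].
by rewrite modnMDl divnMDl // modn_small // (divn_small lt) addn0.
Qed.

Definition lasso_pos (H kL j : nat) : nat :=
  if j < H then j else kL + (j - kL) %% (H - kL).

(* Position in the unfolding of the discrete lasso reached at belief time j:
   each completed turn of the belief loop advances by one discrete loop length. *)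
Definition lasso_index (I : nat -> nat) (H kL K L j : nat) : nat :=
  I (lasso_pos H kL j) + (j - kL) %/ (H - kL) * (K - L).+1.

Lemma lasso_pathE (R : realType) (n : nat) H kL (bs : nat -> belief R n) j :
  lasso_path H kL bs j = bs (lasso_pos H kL j).
Proof. by rewrite /lasso_path /lasso_pos; case: ifP. Qed.

Lemma lasso_pos_lt H kL j : kL < H -> lasso_pos H kL j < H.
Proof.
move=> kL_lt_H; rewrite /lasso_pos; case: ifP => // _.
have := @ltn_pmod (j - kL) (H - kL); lia.
Qed.

Lemma lasso_pos_loop H kL j :
  kL < H -> kL <= j -> lasso_pos H kL j = kL + (j - kL) %% (H - kL).
Proof.
move=> kL_lt_H; rewrite /lasso_pos; case: ifP => // jH kLj.
by rewrite modn_small; lia.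
Qed.

Lemma lasso_index0 I H kL K L : 0 < H -> lasso_index I H kL K L 0 = I 0.
Proof. by move=> H_gt0; rewrite /lasso_index /lasso_pos H_gt0 div0n addn0. Qed.

Section LassoIndex.

Context {I : nat -> nat} {H kL K L : nat}.
Hypotheses (kL_lt_H : kL < H) (L_le_K : L <= K).
Hypothesis I_step : forall k, k.+1 < H -> stutter_step I k.
Hypotheses (I_last : I H.-1 = K) (I_loop : I kL = L).

Let g := lasso_index I H kL K L.

Lemma I_le_last k : k < H -> I k <= K.
Proof.
by move=> kH; rewrite -I_last; apply: stutter_mono => [i ?|]; [apply: I_step|]; lia.
Qed.

Lemma I_ge_loop k : kL <= k < H -> L <= I k.
Proof.
move=> /andP[kLk kH]; rewrite -I_loop.
by apply: stutter_mono kLk => i ?; apply: I_step; lia.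
Qed.

Lemma lasso_index_step j : stutter_step g j.
Proof.
rewrite /stutter_step /g /lasso_index.
have [jkL|kLj] := ltnP j kL.
  have [-> ->] : j.+1 - kL = 0 /\ j - kL = 0 by lia.
  rewrite /lasso_pos !ifT ?div0n ?addn0; try lia.
  by apply: I_step; lia.
rewrite !lasso_pos_loop ?(leqW kLj) // subSn //.
have p_gt0 : 0 < H - kL by lia.
have := @modn_divnS (j - kL) _ p_gt0; have := @ltn_pmod (j - kL) _ p_gt0.
set r := _ %% _; set w := _ %/ _.
case: eqP => [wrap|nowrap] lt [-> ->].
  rewrite addn0 I_loop mulSn (_ : kL + r = H.-1) ?I_last; lia.
rewrite addnS; have [->|->] : stutter_step I (kL + r) by apply: I_step; lia.
all: lia.
Qed.

Lemma lasso_index_unbounded N : exists j, N <= g j.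
Proof.
exists (kL + N * (H - kL)); rewrite /g /lasso_index addKn mulnK; last lia.
by rewrite (leq_trans _ (leq_addl _ _)) // leq_pmulr.
Qed.

Lemma unfold_pos_lasso_index j : unfold_pos K L (g j) = I (lasso_pos H kL j).
Proof.
rewrite /g /lasso_index /unfold_pos.
have IK : I (lasso_pos H kL j) <= K by apply/I_le_last/lasso_pos_lt.
have [jH|Hj] := ltnP j H.
  by rewrite divn_small ?mul0n ?addn0 ?IK //; lia.
have LI : L <= I (lasso_pos H kL j).
  by apply: I_ge_loop; rewrite lasso_pos_lt // andbT /lasso_pos ltnNge Hj /=; lia.
have : (K - L).+1 <= (j - kL) %/ (H - kL) * (K - L).+1.
  by rewrite leq_pmull // divn_gt0; lia.
set x := I _; set w := _ %/ _ => wP.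
rewrite ifF; last lia.
rewrite (_ : x + w * _ - L = w * (K - L).+1 + (x - L)); last lia.
rewrite modnMDl modn_small; lia.
Qed.

End LassoIndex.

Definition labels_sound {R : realType} {n : nat} (M : kripke R n) : Prop :=
  forall s f b, klabel M s f -> kregion M s b -> bsat b f.

Lemma abstraction_labels_sound {R : realType} {n : nat} {M : kripke R n} {phi b0} :
  is_abstraction M phi b0 -> labels_sound M.
Proof. by move=> [_ [_ label_valid]] s f b /label_valid[_]; apply. Qed.

Section Soundness.

Context {R : realType} {n m q r : nat}.
Context {A : 'M[R]_n} {B : 'M[R]_(n, m)} {C : 'M[R]_(q, n)} {W : 'M[R]_n}.
Context {V : 'cV[R]_n -> 'M[R]_q} {Hu : 'M[R]_(r, m)} {cu : 'cV[R]_r}.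
Context {M : kripke R n} {phi : pform (prtl_pred R n)} {b0 : belief R n}.

Lemma idPRTL_run_found {excl H loop bs us} :
  @idPRTL_run R n m q r A B C W V Hu cu M phi b0 excl (IdFound H loop bs us) ->
  exists excl' (P : dpath (kst M)), bmc_finds phi excl' P /\
    fsearch_ok A B C W V Hu cu b0 P H loop bs us.
Proof.
move E: (IdFound H loop bs us) => o run.
elim: run E => [{}excl P H' loop' bs' us' found ok [-> -> -> ->]| |//].
- by exists excl, P.
- by move=> {}excl P o' _ _ IH /IH.
Qed.

Hypothesis M_sound : labels_sound M.

Lemma fsearch_lasso_models {P : dpath (kst M)} {H kL bs us} :
  dpath_sat P phi -> fsearch_ok A B C W V Hu cu b0 P H (Some kL) bs us ->
  prtl_models (lasso_path H kL bs) phi.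
Proof.
move=> P_sat [_ [_ [I [I0 [L_le_K [H_gt0 [kL_lt_H [I_step [I_reg [I_last [I_loop _]]]]]]]]]]].
rewrite /dpath_sat L_le_K in P_sat.
have st := lasso_index_step kL_lt_H L_le_K I_step I_last I_loop.
have unb := lasso_index_unbounded kL_lt_H L_le_K I_last I_loop.
move: P_sat; rewrite -{1}I0 -(lasso_index0 I H kL (dK P) (dL P) H_gt0).
apply: (sat_tilde_stutter st unb).
move=> j f sf /=; rewrite unfold_pos_lasso_index // => lab_f.
apply: bsat_prtl_sat sf _; rewrite lasso_pathE.
exact: M_sound lab_f (I_reg _ (lasso_pos_lt _ _ j kL_lt_H)).
Qed.

Lemma fsearch_finite_models {P : dpath (kst M)} {H bs us rho} :
  dpath_sat P phi -> fsearch_ok A B C W V Hu cu b0 P H None bs us ->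
  (forall k, k <= H -> rho k = bs k) -> prtl_models rho phi.
Proof.
move=> P_sat [_ [_ [I [I0 [K_lt_L [I_step [I_reg I_last]]]]]]] rho_bs.
rewrite /dpath_sat leqNgt K_lt_L /= -I0 in P_sat.
apply: (sat_fin_tilde_stutter I_step I_last _ phi 0 (leq0n H) P_sat).
move=> j f jH sf lab_f; apply: bsat_prtl_sat sf _; rewrite rho_bs //.
exact: M_sound lab_f (I_reg j jH).
Qed.

End Soundness.

Local Open Scope ring_scope.

Theorem theorem3 (R : realType) (n m q r : nat)
  (A : 'M[R]_n) (B : 'M[R]_(n, m)) (C : 'M[R]_(q, n)) (W : 'M[R]_n)
  (V : 'cV[R]_n -> 'M[R]_q) (Hu : 'M[R]_(r, m)) (cu : 'cV[R]_r)
  (phi : pform (prtl_pred R n)) (xinit : 'cV[R]_n) (Sinit : 'M[R]_n)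
  (M : kripke R n)
  (H : nat) (loop : option nat) (bs : nat -> belief R n) (us : nat -> 'cV[R]_m) :
  stabilisable A B ->
  psd W ->
  (forall x, psd (V x)) ->
  full_dim_polytope Hu cu ->
  psd Sinit ->
  (forall p, List.In p (preds_of phi) -> 0 <= peps p <= 1) ->
  is_abstraction M phi (Belief xinit Sinit) ->
  @idPRTL_run R n m q r A B C W V Hu cu M phi (Belief xinit Sinit) nil (IdFound H loop bs us) ->
  found_path_models H loop bs phi.
Proof.
move=> _ _ _ _ _ _ abs /idPRTL_run_found[excl [P [[_ [_ P_sat]] ok]]].
have M_sound := abstraction_labels_sound abs.
case: loop ok => [kL|] ok /=.
- exact: (fsearch_lasso_models M_sound P_sat ok).
- by move=> rho rho_bs; exact: (fsearch_finite_models M_sound P_sat ok rho_bs).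
Qed.
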